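(* Let $\pi_1,\pi_2,\pi_3$ be patterns such that $(\pi_1,\pi_2)$ and $(\pi_2,\pi_3)$ are chainable. Then (1) $(\pi_1,\pi_2*\pi_3)$ and $(\pi_1*\pi_2,\pi_3)$ are chainable; (2) $r(\pi_1,\pi_2*\pi_3)=r(\pi_1,\pi_2)$ and $r(\pi_1*\pi_2,\pi_3)=r(\pi_2,\pi_3)$; (3) $\pi_1*(\pi_2*\pi_3)=(\pi_1*\pi_2)*\pi_3$.
   Context: A pattern is a tuple $\pi=(a,b,c,d)$ of positive integers. Two patterns $\pi=(a,b,c,d)$, $\pi'=(a',b',c',d')$ are chainable if $ac/a'=b'd'/d$, this common value (denoted $r(\pi,\pi')$) is an integer, $a\mid a'$ and $d'\mid d$. For a chainable pair, $\pi*\pi':=(a,\,bd/d',\,a'c'/a,\,d')$. *)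

From mathcomp Require Import all_boot all_order all_algebra.
Set Implicit Arguments. Unset Strict Implicit. Unset Printing Implicit Defensive.
Import Order.TTheory GRing.Theory Num.Theory.

Record pattern := Pattern { pa : nat; pb : nat; pc : nat; pd : nat }.

Definition is_pattern (p : pattern) : Prop :=
  (0 < pa p)%N /\ (0 < pb p)%N /\ (0 < pc p)%N /\ (0 < pd p)%N.

Definition r (p q : pattern) : rat :=
  ((pa p * pc p)%N%:R / (pa q)%:R)%R.

Definition chainable (p q : pattern) : Prop :=
  r p q = ((pb q * pd q)%N%:R / (pd p)%:R)%R /\
  r p q \is a Num.int /\
  (pa p %| pa q)%N /\ (pd q %| pd p)%N.

(* pi * pi' := (a, b d / d', a' c' / a, d')  (exact divisions when chainable) *)
Definition star (p q : pattern) : pattern :=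
  Pattern (pa p) (pb p * pd p %/ pd q) (pa q * pc q %/ pa p) (pd q).

From mathcomp Require Import all_boot all_order all_algebra.
Import Order.TTheory GRing.Theory Num.Theory.
Set Implicit Arguments. Unset Strict Implicit. Unset Printing Implicit Defensive.
Local Open Scope ring_scope.

(* Chainability of (pi, pi') means a c = k a' and b' d' = k d for the natural
   number k = r(pi, pi'), plus a | a' and d' | d.  As pi * pi' keeps a and d' while
   b(pi * pi') d' = b d and a c(pi * pi') = a' c', the ratio k carries over to the composite pairs, and
   the exact divisions cancel so that both triple products equal
   (a1, b1 d1 / d3, a3 c3 / a1, d3). *)

Lemma r_nat (p q : pattern) (k : nat) : (0 < pa q)%N ->
  (pa p * pc p = k * pa q)%N -> r p q = k%:R.
Proof. by move=> a_gt0 ac_eq; rewrite /r ac_eq natrM mulfK // pnatr_eq0 -lt0n. Qed.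

Lemma chainable_natP (p q : pattern) : (0 < pa q)%N -> (0 < pd p)%N ->
  chainable p q <->
  exists k : nat, [/\ pa p * pc p = k * pa q, pb q * pd q = k * pd p,
                      pa p %| pa q & pd q %| pd p]%N.
Proof.
move=> a_gt0 d_gt0; split.
- move=> [r_eq [r_int [dv_a dv_d]]].
  have /natrP [k r_k] : r p q \is a Num.nat by rewrite natrEint r_int /r divr_ge0.
  have scale_eq (m n : nat) : (0 < n)%N -> (m%:R / n%:R = k%:R :> rat) ->
      m = (k * n)%N.
    move=> n_gt0 /(congr1 ( *%R^~ n%:R)); rewrite divfK ?pnatr_eq0 -?lt0n //.
    by rewrite -natrM => /eqP; rewrite eqr_nat => /eqP.
  by exists k; split => //; apply: scale_eq => //; rewrite -?r_eq.
- move=> [k [ac_eq bd_eq dv_a dv_d]].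
  have r_k := r_nat a_gt0 ac_eq.
  split; last split=> //.
  + by rewrite r_k bd_eq natrM mulfK // pnatr_eq0 -lt0n.
  + by rewrite r_k natr_int.
Qed.

Lemma pb_star_mul (p q : pattern) : (pd q %| pd p)%N ->
  (pb (star p q) * pd (star p q) = pb p * pd p)%N.
Proof. by move=> dv_d; rewrite /= divnK // dvdn_mull. Qed.

Lemma pc_star_mul (p q : pattern) : (pa p %| pa q)%N ->
  (pa (star p q) * pc (star p q) = pa q * pc q)%N.
Proof. by move=> dv_a; rewrite /= mulnC divnK // dvdn_mulr. Qed.

Theorem lemma4p7 (p1 p2 p3 : pattern) :
  is_pattern p1 -> is_pattern p2 -> is_pattern p3 ->
  chainable p1 p2 -> chainable p2 p3 ->
  [/\ chainable p1 (star p2 p3) /\ chainable (star p1 p2) p3,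
      r p1 (star p2 p3) = r p1 p2 /\ r (star p1 p2) p3 = r p2 p3
    & star p1 (star p2 p3) = star (star p1 p2) p3].
Proof.
move=> [a1_gt0 [_ [_ d1_gt0]]] [a2_gt0 [_ [_ d2_gt0]]] [a3_gt0 _].
move=> /chainable_natP-/(_ a2_gt0 d1_gt0) [k1 [ac1 bd2 dv_a12 dv_d21]].
move=> /chainable_natP-/(_ a3_gt0 d2_gt0) [k2 [ac2 bd3 dv_a23 dv_d32]].
have bd23 := pb_star_mul dv_d32; have ac12 := pc_star_mul dv_a12.
split.
- split; apply/chainable_natP => //.
  + by exists k1; split; rewrite ?bd23 //; apply: dvdn_trans dv_d32 dv_d21.
  + by exists k2; split; rewrite ?ac12 //; apply: dvdn_trans dv_a12 dv_a23.
- split.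
  + by rewrite (r_nat (q := star p2 p3) a2_gt0 ac1) (r_nat a2_gt0 ac1).
  + by rewrite (r_nat a3_gt0 (etrans ac12 ac2)) (r_nat a3_gt0 ac2).
- by rewrite /star /= (pc_star_mul dv_a23) (pb_star_mul dv_d21).
Qed.
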